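(* Let $\{W_n\}_{n\ge0}$ be an Appell monic polynomial sequence with cubic decomposition $W_{3n}(x)=P_n(x^3)+xa^1_{n-1}(x^3)+x^2a^2_{n-1}(x^3)$, $W_{3n+1}(x)=b^1_n(x^3)+xQ_n(x^3)+x^2b^2_{n-1}(x^3)$, $W_{3n+2}(x)=c^1_n(x^3)+xc^2_n(x^3)+x^2R_n(x^3)$ (components as in the context). Let $\mathcal{O}_{0,1,2}=D(I+3xD)(2I+3xD)$, $\mathcal{O}_{2,0,1}=(2I+3xD)D(I+3xD)$, $\mathcal{O}_{1,2,0}=(I+3xD)(2I+3xD)D$. Then for $n\ge1$: $a^2_{n-1}=((n+1)(3n+1)(3n+2))^{-1}\mathcal{O}_{0,1,2}a^2_n$, $b^2_{n-1}=((n+1)(3n+2)(3n+4))^{-1}\mathcal{O}_{0,1,2}b^2_n$, $R_n=((n+1)(3n+4)(3n+5))^{-1}\mathcal{O}_{0,1,2}R_{n+1}$, $a^1_{n-1}=((n+1)(3n+1)(3n+2))^{-1}\mathcal{O}_{2,0,1}a^1_n$, $Q_n=((n+1)(3n+2)(3n+4))^{-1}\mathcal{O}_{2,0,1}Q_{n+1}$, $c^2_{n-1}=(n(3n+1)(3n+2))^{-1}\mathcal{O}_{2,0,1}c^2_n$, $P_n=((n+1)(3n+1)(3n+2))^{-1}\mathcal{O}_{1,2,0}P_{n+1}$, $b^1_{n-1}=(n(3n-1)(3n+1))^{-1}\mathcal{O}_{1,2,0}b^1_n$, $c^1_{n-1}=(n(3n+1)(3n+2))^{-1}\mathcal{O}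_{1,2,0}c^1_n$.
   Context: $\mathcal{P}$ is the space of complex polynomials; $I$ is the identity, $D$ the derivative, $x$ multiplication by $x$, products of operators are compositions. An MPS is a sequence $\{W_n\}_{n\ge0}$ with $W_n$ monic of degree $n$; it is Appell if $DW_{n+1}=(n+1)W_n$ for $n\ge0$. Cubic decomposition: for any MPS there are unique polynomials with the displayed identities for all $n\ge0$, where $\{P_n\},\{Q_n\},\{R_n\}$ are MPSs and $\deg a^1_{n-1},\deg a^2_{n-1},\deg b^2_{n-1}\le n-1$, $\deg b^1_n,\deg c^1_n,\deg c^2_n\le n$, with $a^1_{-1}=a^2_{-1}=b^2_{-1}=0$. *)

From HB Require Import structures.
From mathcomp Require Import all_boot all_order all_algebra.
From mathcomp Require Import complex Rstruct.
Set Implicit Arguments.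
Unset Strict Implicit.
Unset Printing Implicit Defensive.
Import Order.TTheory GRing.Theory Num.Theory.
Local Open Scope ring_scope.

Definition C : Type := complex Rdefinitions.R.
Notation Cpoly := {poly C}.

Definition opD (p : Cpoly) : Cpoly := p^`().
Definition opL (k : nat) (p : Cpoly) : Cpoly := k%:R *: p + 3%:R *: ('X * p^`()).

Definition O012 (p : Cpoly) : Cpoly := opD (opL 1 (opL 2 p)).
Definition O201 (p : Cpoly) : Cpoly := opL 2 (opD (opL 1 p)).
Definition O120 (p : Cpoly) : Cpoly := opL 1 (opL 2 (opD p)).

Definition MPS (W : nat -> Cpoly) : Prop :=
  forall n, W n \is monic /\ size (W n) = n.+1.

Definition Appell (W : nat -> Cpoly) : Prop :=
  MPS W /\ forall n, (W n.+1)^`() = n.+1%:R *: W n.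

(* For a sequence f indexed by m >= 0, [prev f n] is f_{n-1}, with f_{-1} = 0. *)
Definition prev (f : nat -> Cpoly) (n : nat) : Cpoly :=
  if n is m.+1 then f m else 0.

Definition cub (p : Cpoly) : Cpoly := p \Po 'X^3.

(* Cubic decomposition of W with components P,Q,R (MPS), a1 a2 b2 (indexed so
   that a1 m = a^1_m, m >= 0, a^1_{-1} = 0), b1 c1 c2. *)
Definition cubic_decomposition (W : nat -> Cpoly)
  (P Q R a1 a2 b1 b2 c1 c2 : nat -> Cpoly) : Prop :=
  [/\ MPS P /\ MPS Q /\ MPS R,
      (forall m, size (a1 m) <= m.+1 /\ size (a2 m) <= m.+1 /\ size (b2 m) <= m.+1)%N,
      (forall n, size (b1 n) <= n.+1 /\ size (c1 n) <= n.+1 /\ size (c2 n) <= n.+1)%N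
    & forall n,
      [/\ W (3 * n)%N = cub (P n) + 'X * cub (prev a1 n) + 'X^2 * cub (prev a2 n),
          W (3 * n + 1)%N = cub (b1 n) + 'X * cub (Q n) + 'X^2 * cub (prev b2 n)
        & W (3 * n + 2)%N = cub (c1 n) + 'X * cub (c2 n) + 'X^2 * cub (R n)]].

(* Writing a polynomial as p(x^3) + x q(x^3) + x^2 r(x^3), differentiation acts
   by a cyclic shift of the components: the derivative is
   (I+3xD)q (x^3) + x (2I+3xD)r (x^3) + x^2 (3 Dp)(x^3).  Three derivatives
   therefore send every component back to its own slot, acted on by
   3 O_{1,2,0}, 3 O_{2,0,1} and 3 O_{0,1,2} respectively.  For an Appell
   sequence D^3 W_{m+3} = (m+1)(m+2)(m+3) W_m, and comparing components of the
   two sides (the decomposition is unique) yields the nine recurrences. *)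
From HB Require Import structures.
From mathcomp Require Import all_boot all_order all_algebra.
From mathcomp Require Import complex Rstruct.
From mathcomp Require Import ring zify.
Import GRing.Theory Num.Theory.
Local Open Scope ring_scope.

Definition cubic_form (p q r : {poly C}) : {poly C} :=
  cub p + 'X * cub q + 'X^2 * cub r.

Lemma coef_cub (p : {poly C}) i :
  (cub p)`_i = if (3 %| i)%N then p`_(i %/ 3) else 0.
Proof. exact: coef_comp_poly_Xn. Qed.

Lemma coef_cubic_form0 (p q r : {poly C}) i : (cubic_form p q r)`_(3 * i) = p`_i.
Proof.
rewrite !coefD coefXM coefXnM !coef_cub dvdn_mulr // mulKn //.
case: i => [|i] /=; first by rewrite !addr0.
have [n3 n31] : (~~ (3 %| 3 * i.+1 - 2) /\ ~~ (3 %| (3 * i.+1).-1))%N.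
  by split; apply/negP => /dvdnP [m]; lia.
by rewrite (negbTE n3) (negbTE n31) /= !if_same !addr0.
Qed.

Lemma coef_cubic_form1 (p q r : {poly C}) i : (cubic_form p q r)`_(3 * i + 1) = q`_i.
Proof.
rewrite !coefD coefXM coefXnM !coef_cub addn1 /= dvdn_mulr // mulKn //.
have n31 : ~~ (3 %| (3 * i).+1)%N by apply/negP => /dvdnP [m]; lia.
rewrite (negbTE n31) add0r; case: i n31 => [|i] _; first by rewrite addr0.
have n3 : ~~ (3 %| (3 * i.+1).+1 - 2)%N by apply/negP => /dvdnP [m]; lia.
by rewrite (negbTE n3) /= addr0.
Qed.

Lemma coef_cubic_form2 (p q r : {poly C}) i : (cubic_form p q r)`_(3 * i + 2) = r`_i.
Proof.
rewrite !coefD coefXM coefXnM !coef_cub addn2 /=.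
have [n32 n31] : (~~ (3 %| (3 * i).+2) /\ ~~ (3 %| (3 * i).+1))%N.
  by split; apply/negP => /dvdnP [m]; lia.
by rewrite (negbTE n32) (negbTE n31) !add0r subn2 /= dvdn_mulr // mulKn.
Qed.

Lemma cubic_form_inj (p q r p' q' r' : {poly C}) :
  cubic_form p q r = cubic_form p' q' r' -> [/\ p = p', q = q' & r = r'].
Proof.
move=> E; split; apply/polyP => i.
- by rewrite -(coef_cubic_form0 p q r) E coef_cubic_form0.
- by rewrite -(coef_cubic_form1 p q r) E coef_cubic_form1.
- by rewrite -(coef_cubic_form2 p q r) E coef_cubic_form2.
Qed.

Lemma scale_cubic_form (c : C) (p q r : {poly C}) :
  c *: cubic_form p q r = cubic_form (c *: p) (c *: q) (c *: r).
Proof. by rewrite /cubic_form /cub !comp_polyZ !scalerDr -!scalerAr. Qed.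

Lemma opLZ k (c : C) (p : {poly C}) : opL k (c *: p) = c *: opL k p.
Proof. by rewrite /opL derivZ -scalerAr scalerDr !scalerA !(mulrC c). Qed.

Lemma deriv_cub (p : {poly C}) : (cub p)^`() = 3%:R *: ('X^2 * cub p^`()).
Proof. by rewrite /cub deriv_comp derivXn /= !scaler_nat; ring. Qed.

Lemma deriv_cubic_form (p q r : {poly C}) :
  (cubic_form p q r)^`() = cubic_form (opL 1 q) (opL 2 r) (3%:R *: opD p).
Proof.
rewrite /cubic_form /opL /opD !derivD !derivM derivX !deriv_cub.
rewrite /cub !comp_polyD !comp_polyZ !comp_polyM comp_polyX /= !scaler_nat; ring.
Qed.

Lemma deriv3_cubic_form (p q r : {poly C}) :
  (cubic_form p q r)^`(3) = 3%:R *: cubic_form (O120 p) (O201 q) (O012 r).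
Proof.
rewrite /derivn /= !deriv_cubic_form !opLZ scale_cubic_form.
by rewrite /O120 /O201 /O012.
Qed.

Lemma Appell_derivn3 (W : nat -> {poly C}) m :
  Appell W -> (W m.+3)^`(3) = ((m + 1) * (m + 2) * (m + 3))%N%:R *: W m.
Proof.
case=> _ dW; rewrite /derivn /= dW derivZ dW !derivZ dW !scalerA -!natrM.
by congr (_%:R *: _); lia.
Qed.

Lemma Appell_cubic_step {W : nat -> {poly C}} {i j : nat} (N : nat)
    {p q r p' q' r' : {poly C}} :
  Appell W -> W i = cubic_form p q r -> W j = cubic_form p' q' r' ->
  i = (j + 3)%N -> ((j + 1) * (j + 2) * (j + 3) = 3 * N)%N ->
  [/\ p' = N%:R^-1 *: O120 p, q' = N%:R^-1 *: O201 q & r' = N%:R^-1 *: O012 r].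
Proof.
move=> HA Wi Wj ij jN.
have N_neq0 : (N%:R : C) != 0 by rewrite pnatr_eq0; apply/eqP; lia.
have three_neq0 : (3%:R : C) != 0 by rewrite pnatr_eq0.
have := @Appell_derivn3 W j HA.
rewrite jN -[j.+3]addn3 -ij Wi Wj deriv3_cubic_form natrM -scalerA.
move/(scalerI three_neq0); rewrite !scale_cubic_form => /cubic_form_inj [-> -> ->].
by rewrite !scalerA mulVf // !scale1r.
Qed.

Theorem proposition7 (W P Q R a1 a2 b1 b2 c1 c2 : nat -> {poly C}) :
  Appell W ->
  cubic_decomposition W P Q R a1 a2 b1 b2 c1 c2 ->
  forall n : nat, (1 <= n)%N ->
  a2 n.-1 = ((n.+1 * (3 * n + 1) * (3 * n + 2))%N%:R)^-1 *: O012 (a2 n) /\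
      b2 n.-1 = ((n.+1 * (3 * n + 2) * (3 * n + 4))%N%:R)^-1 *: O012 (b2 n) /\
      R n = ((n.+1 * (3 * n + 4) * (3 * n + 5))%N%:R)^-1 *: O012 (R n.+1) /\
      a1 n.-1 = ((n.+1 * (3 * n + 1) * (3 * n + 2))%N%:R)^-1 *: O201 (a1 n) /\
      Q n = ((n.+1 * (3 * n + 2) * (3 * n + 4))%N%:R)^-1 *: O201 (Q n.+1) /\
      c2 n.-1 = ((n * (3 * n + 1) * (3 * n + 2))%N%:R)^-1 *: O201 (c2 n) /\
      P n = ((n.+1 * (3 * n + 1) * (3 * n + 2))%N%:R)^-1 *: O120 (P n.+1) /\
      b1 n.-1 = ((n * (3 * n - 1) * (3 * n + 1))%N%:R)^-1 *: O120 (b1 n) /\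
      c1 n.-1 = ((n * (3 * n + 1) * (3 * n + 2))%N%:R)^-1 *: O120 (c1 n).
Proof.
move=> HA [_ _ _ dec] [//|k] _; set n := k.+1.
have [W0' W1' W2'] := dec n.+1; have [W0 W1 W2] := dec n; have [_ W1k W2k] := dec k.
have [recP reca1 reca2] := Appell_cubic_step
  (n.+1 * (3 * n + 1) * (3 * n + 2))%N HA W0' W0 ltac:(lia) ltac:(lia).
have [_ recQ recb2] := Appell_cubic_step
  (n.+1 * (3 * n + 2) * (3 * n + 4))%N HA W1' W1 ltac:(lia) ltac:(lia).
have [_ _ recR] := Appell_cubic_step
  (n.+1 * (3 * n + 4) * (3 * n + 5))%N HA W2' W2 ltac:(lia) ltac:(lia).
have [recb1 _ _] := Appell_cubic_step
  (n * (3 * n - 1) * (3 * n + 1))%N HA W1 W1k ltac:(lia) ltac:(lia).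
have [recc1 recc2 _] := Appell_cubic_step
  (n * (3 * n + 1) * (3 * n + 2))%N HA W2 W2k ltac:(lia) ltac:(lia).
by do !split.
Qed.
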